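(* The 2-sided ideal $\Delta[\Delta,\Delta]\Delta$ of $\Delta$ generated by $[\Delta,\Delta]={\rm Span}\{uv-vu : u,v\in\Delta\}$ coincides with the kernel of the unique $\mathbb F$-algebra homomorphism $\Delta\to\mathbb F[\overline A,\overline B,\overline C]$ sending $A\mapsto\overline A$, $B\mapsto\overline B$, $C\mapsto\overline C$, where $\overline A,\overline B,\overline C$ are mutually commuting indeterminates.
   Context: Let $\mathbb F$ be a field and fix a nonzero $q\in\mathbb F$ with $q^4\neq 1$. The universal Askey--Wilson algebra $\Delta$ is the associative $\mathbb F$-algebra with 1 with generators $A,B,C$ subject to the relations that each of $A+\frac{qBC-q^{-1}CB}{q^2-q^{-2}}$, $B+\frac{qCA-q^{-1}AC}{q^2-q^{-2}}$, $C+\frac{qAB-q^{-1}BA}{q^2-q^{-2}}$ is central. (The homomorphism to the polynomial algebra exists and is surjective.) *)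

From HB Require Import structures.
From mathcomp Require Import all_boot all_order all_algebra.
From mathcomp Require Export mpoly.
Set Implicit Arguments. Unset Strict Implicit. Unset Printing Implicit Defensive.
Import GRing.Theory.
Local Open Scope ring_scope.

Definition is_alg_hom (F : fieldType) (D R : algType F) (f : D -> R) : Prop :=
  [/\ forall (a : F) (x y : D), f (a *: x + y) = a *: f x + f y,
      forall x y : D, f (x * y) = f x * f y &
      f 1 = 1].

Definition central (F : fieldType) (R : algType F) (x : R) : Prop :=
  forall y : R, x * y = y * x.

Definition aw_term (F : fieldType) (R : algType F) (q : F) (u v : R) : R :=
  (q / (q ^+ 2 - q ^- 2)) *: (u * v) - (q^-1 / (q ^+ 2 - q ^- 2)) *: (v * u).

Definition AW_rel (F : fieldType) (q : F) (R : algType F) (a b c : R) : Prop :=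
  [/\ central (a + aw_term q b c),
      central (b + aw_term q c a) &
      central (c + aw_term q a b)].

(* (D, A, B, C) is the algebra presented by generators A, B, C and the
   Askey--Wilson relations: universal property of the presentation. *)
Definition is_universal_AW (F : fieldType) (q : F) (D : algType F) (A B C : D)
  : Prop :=
  AW_rel q A B C /\
  forall (R : algType F) (a b c : R), AW_rel q a b c ->
    exists f : D -> R,
      [/\ is_alg_hom f, f A = a, f B = b, f C = c &
          forall g : D -> R, is_alg_hom g -> g A = a -> g B = b -> g C = c ->
            forall x, g x = f x].

(* The two-sided ideal D [D,D] D generated by all commutators uv - vu:
   finite sums of elements x (uv - vu) y. *)
Definition comm_ideal (F : fieldType) (D : algType F) (z : D) : Prop :=
  exists s : seq (D * D * D * D),
    z = \sum_(t <- s) t.1.1.1 * (t.1.1.2 * t.1.2 - t.1.2 * t.1.1.2) * t.2.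

(** In an algebra generated by [A], [B], [C], every element is congruent modulo the
    commutator ideal to the polynomial in [A], [B], [C] read off from its image in
    the commutative polynomial ring, since evaluating monomials in a fixed order is
    multiplicative up to commutators. The universal Askey--Wilson algebra is
    generated by [A], [B], [C]: their generated subalgebra satisfies the defining
    relations, so the universal property splits its inclusion. Hence the kernel of
    [f] lies in the commutator ideal, and conversely a commutative target kills all
    commutators. *)

From HB Require Import structures.
From mathcomp Require Import all_boot all_order all_algebra.
From mathcomp Require Import mpoly.
From Stdlib Require Import ClassicalEpsilon.
Import GRing.Theory.
Local Open Scope ring_scope.
Set Implicit Arguments. Unset Strict Implicit. Unset Printing Implicit Defensive.

Section CommIdeal.
Variables (F : fieldType) (D : algType F).
Implicit Types x y u v : D.

Lemma comm_ideal0 : comm_ideal (0 : D).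
Proof. by exists [::]; rewrite big_nil. Qed.

Lemma comm_idealD x y : comm_ideal x -> comm_ideal y -> comm_ideal (x + y).
Proof. by move=> [s ->] [t ->]; exists (s ++ t); rewrite big_cat. Qed.

Lemma comm_idealZ (a : F) x : comm_ideal x -> comm_ideal (a *: x).
Proof.
move=> [s ->]; exists [seq (a *: t.1.1.1, t.1.1.2, t.1.2, t.2) | t <- s].
by rewrite big_map scaler_sumr; apply: eq_bigr => t _ /=; rewrite -!scalerAl.
Qed.

Lemma comm_idealB x y : comm_ideal x -> comm_ideal y -> comm_ideal (x - y).
Proof. by move=> hx hy; rewrite -scaleN1r; apply/comm_idealD/comm_idealZ. Qed.

Lemma comm_idealMl x y : comm_ideal x -> comm_ideal (y * x).
Proof.
move=> [s ->]; exists [seq (y * t.1.1.1, t.1.1.2, t.1.2, t.2) | t <- s].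
by rewrite big_map mulr_sumr; apply: eq_bigr => t _ /=; rewrite !mulrA.
Qed.

Lemma comm_idealMr x y : comm_ideal x -> comm_ideal (x * y).
Proof.
move=> [s ->]; exists [seq (t.1.1.1, t.1.1.2, t.1.2, t.2 * y) | t <- s].
by rewrite big_map mulr_suml; apply: eq_bigr => t _ /=; rewrite !mulrA.
Qed.

Lemma comm_ideal_commutator u v : comm_ideal (u * v - v * u).
Proof. by exists [:: (1, u, v, 1)]; rewrite big_seq1 /= mul1r mulr1. Qed.

Lemma comm_ideal_sum (I : Type) (r : seq I) (P : pred I) (G : I -> D) :
  (forall i, P i -> comm_ideal (G i)) -> comm_ideal (\sum_(i <- r | P i) G i).
Proof.
move=> hG; elim/big_rec: _ => [|i z Pi hz]; first exact: comm_ideal0.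
exact: comm_idealD (hG _ Pi) hz.
Qed.

Lemma comm_ideal_prodM n (a b : 'I_n -> D) :
  comm_ideal (\prod_(i < n) (a i * b i) - (\prod_(i < n) a i) * \prod_(i < n) b i).
Proof.
elim/big_rec3: _ => [|i Y X P _ IH]; first by rewrite mulr1 subrr; exact: comm_ideal0.
have -> : a i * b i * P - a i * X * (b i * Y) =
    a i * b i * (P - X * Y) + a i * (b i * X - X * b i) * Y.
  by rewrite !mulrBr !mulrBl !mulrA addrA subrK.
apply: comm_idealD; first exact: comm_idealMl.
exact/comm_idealMr/comm_idealMl/comm_ideal_commutator.
Qed.

End CommIdeal.

Section AlgHom.
Variables (F : fieldType) (D R : algType F) (f : D -> R).
Hypothesis hf : is_alg_hom f.

Lemma alg_homD x y : f (x + y) = f x + f y.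
Proof. by case: hf => fl _ _; have := fl 1 x y; rewrite !scale1r. Qed.

Lemma alg_hom0 : f 0 = 0.
Proof. by apply/eqP; rewrite -(subrr (f 0)) -{2}[0 : D]addr0 alg_homD addrK. Qed.

Lemma alg_homZ (a : F) x : f (a *: x) = a *: f x.
Proof. by case: hf => fl _ _; rewrite -[a *: x]addr0 fl alg_hom0 addr0. Qed.

Lemma alg_homB x y : f (x - y) = f x - f y.
Proof. by rewrite -scaleN1r alg_homD alg_homZ scaleN1r. Qed.

End AlgHom.

Lemma alg_hom_comm_ideal (F : fieldType) (D : algType F) (R : comAlgType F)
    (f : D -> R) (z : D) :
  is_alg_hom f -> comm_ideal z -> f z = 0.
Proof.
move=> hf [s ->]; have [_ fM _] := hf.
elim/big_rec: _ => [|t w _ IH]; first exact: alg_hom0.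
rewrite alg_homD // IH !fM alg_homB // !fM [f t.1.2 * _]mulrC.
by rewrite subrr mulr0 mul0r addr0.
Qed.

Section NcEval.
Variables (F : fieldType) (D : algType F) (n : nat) (v : 'I_n -> D).

(* The monomial ['X_[m]] goes to [v 0 ^+ m 0 * ... * v n.-1 ^+ m n.-1], in this
   order, so [nc_eval] is multiplicative only modulo commutators. *)
Definition nc_eval (p : {mpoly F[n]}) : D := mmap (GRing.in_alg D) v p.

Lemma nc_eval1 : nc_eval 1 = 1.
Proof. by rewrite /nc_eval -mpolyC1 mmapC /= scale1r. Qed.

Lemma nc_evalX i : nc_eval 'X_i = v i.
Proof. by rewrite /nc_eval mmapX mmap1U. Qed.

Lemma nc_evalD p r : nc_eval (p + r) = nc_eval p + nc_eval r.
Proof. exact: mmapD. Qed.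

Lemma nc_evalZ (c : F) p : nc_eval (c *: p) = c *: nc_eval p.
Proof. by rewrite /nc_eval mmapZ /= mulr_algl. Qed.

Lemma nc_evalM p r : comm_ideal (nc_eval (p * r) - nc_eval p * nc_eval r).
Proof.
pose k := (msize p + msize r)%N.
rewrite /nc_eval (mpolywME (k := k)) ?leq_addr ?leq_addl //.
rewrite raddf_sum /= !(mmapE k) ?leq_addr ?leq_addl //.
rewrite big_distrlr /= pair_bigA -sumrB; apply: comm_ideal_sum => -[m1 m2] _ /=.
rewrite mmapZ mmapX /= !mulr_algl -scalerAl -scalerAr scalerA -scalerBr.
apply: comm_idealZ.
have -> : mmap1 v (m1 + m2)%MM = \prod_(i < n) (v i ^+ m1 i * v i ^+ m2 i).
  by apply: eq_bigr => i _; rewrite mnmDE exprD.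
exact: comm_ideal_prodM.
Qed.

End NcEval.

Definition subalg_prop (F : fieldType) (D : algType F) (P : D -> Prop) : Prop :=
  [/\ P 1, forall (a : F) x y, P x -> P y -> P (a *: x + y) &
      forall x y, P x -> P y -> P (x * y)].

Lemma subalg_prop_nc_eval_congr (F : fieldType) (D : algType F) (n : nat)
    (v : 'I_n -> D) (f : D -> {mpoly F[n]}) :
  is_alg_hom f -> subalg_prop (fun x => comm_ideal (x - nc_eval v (f x))).
Proof.
move=> hf; have [fl fM f1] := hf; split.
- by rewrite f1 nc_eval1 subrr; exact: comm_ideal0.
- move=> a x y hx hy; rewrite fl nc_evalD nc_evalZ.
  have -> : a *: x + y - (a *: nc_eval v (f x) + nc_eval v (f y)) =
      a *: (x - nc_eval v (f x)) + (y - nc_eval v (f y)).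
    by rewrite scalerBr addrACA opprD.
  exact/comm_idealD/hy/comm_idealZ.
- move=> x y hx hy; rewrite fM.
  have -> : x * y - nc_eval v (f x * f y) =
      (x - nc_eval v (f x)) * y + nc_eval v (f x) * (y - nc_eval v (f y))
      - (nc_eval v (f x * f y) - nc_eval v (f x) * nc_eval v (f y)).
    by rewrite mulrBl mulrBr subrKA opprB subrKA.
  apply: comm_idealB; last exact: nc_evalM.
  exact/comm_idealD/comm_idealMl/hy/comm_idealMr.
Qed.

Definition generated (F : fieldType) (D : algType F) (gens : seq D) (x : D) :=
  forall P : D -> Prop, subalg_prop P -> {in gens, forall y, P y} -> P x.

Definition generatedb (F : fieldType) (D : algType F) (gens : seq D) (x : D) :=
  if excluded_middle_informative (generated gens x) then true else false.

Lemma generatedP (F : fieldType) (D : algType F) (gens : seq D) x :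
  reflect (generated gens x) (generatedb gens x).
Proof. by rewrite /generatedb; case: excluded_middle_informative => h; constructor. Qed.

Lemma generated_subalg_closed (F : fieldType) (D : algType F) (gens : seq D) :
  GRing.subsemialg_closed (generatedb gens).
Proof.
apply: GRing.subalg_closed_semi; split.
- by apply/generatedP => P [].
- move=> a x y /generatedP hx /generatedP hy; apply/generatedP => P hP hgens.
  by have [_ hZD _] := hP; apply: hZD; [apply: hx | apply: hy].
- move=> x y /generatedP hx /generatedP hy; apply/generatedP => P hP hgens.
  by have [_ _ hM] := hP; apply: hM; [apply: hx | apply: hy].
Qed.

HB.instance Definition _ (F : fieldType) (D : algType F) (gens : seq D) :=
  GRing.isSubalgClosed.Build F D (generatedb gens) (generated_subalg_closed gens).

Definition subalg_gen (F : fieldType) (D : algType F) (gens : seq D) :=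
  {x : D | generatedb gens x}.

HB.instance Definition _ (F : fieldType) (D : algType F) (gens : seq D) :=
  [isSub of subalg_gen gens for @sval D (generatedb gens)].
HB.instance Definition _ (F : fieldType) (D : algType F) (gens : seq D) :=
  [Choice of subalg_gen gens by <:].
HB.instance Definition _ (F : fieldType) (D : algType F) (gens : seq D) :=
  [SubChoice_isSubAlgebra of subalg_gen gens by <:].

Lemma AW_rel_val (F : fieldType) (q : F) (D : algType F) (gens : seq D)
    (a b c : subalg_gen gens) :
  AW_rel q (val a) (val b) (val c) -> AW_rel q a b c.
Proof.
(* The operations of [subalg_gen gens] compute to those of [D]. *)
have central_val (u w y : subalg_gen gens) :
  central (val u + aw_term q (val w) (val y)) -> central (u + aw_term q w y).
  by move=> h z; apply: val_inj; exact: h.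
by case=> h1 h2 h3; split; apply: central_val.
Qed.

Lemma universal_AW_generated (F : fieldType) (q : F) (D : algType F) (A B C : D) :
  is_universal_AW q A B C -> forall x, generated [:: A; B; C] x.
Proof.
move=> [hrel univ] x; pose gens := [:: A; B; C].
have [gA gB gC] : [/\ generatedb gens A, generatedb gens B & generatedb gens C].
  by split; apply/generatedP => P _; apply; rewrite !inE eqxx ?orbT.
pose a : subalg_gen gens := exist _ A gA.
pose b : subalg_gen gens := exist _ B gB.
pose c : subalg_gen gens := exist _ C gC.
have [g [[gl gM g1] ga gb gc _]] :=
  univ _ a b c (AW_rel_val (a := a) (b := b) (c := c) hrel).
have [h [_ _ _ _ h_uniq]] := univ _ A B C hrel.
have id_h y : y = h y by apply: h_uniq => //; split.
have valg_h : forall y, val (g y) = h y.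
  apply: h_uniq; rewrite ?ga ?gb ?gc //; split.
  - by move=> k y1 y2; rewrite gl.
  - by move=> y1 y2; rewrite gM.
  - by rewrite g1.
by apply/generatedP; rewrite (id_h x) -valg_h; exact: valP.
Qed.

Theorem proposition11p4 (F : fieldType) (q : F) (hq0 : q != 0)
  (hq4 : q ^+ 4 != 1)
  (D : algType F) (A B C : D) (hD : is_universal_AW q A B C)
  (f : D -> {mpoly F[3]}) (hf : is_alg_hom f)
  (hA : f A = 'X_0) (hB : f B = 'X_1) (hC : f C = 'X_2) :
  forall z : D, comm_ideal z <-> f z = 0.
Proof.
move=> z; split; first exact: alg_hom_comm_ideal.
move=> fz; pose v : 'I_3 -> D := nth 0 [:: A; B; C].
have congr_z : comm_ideal (z - nc_eval v (f z)).
  apply: (universal_AW_generated hD z (subalg_prop_nc_eval_congr v hf)).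
  move=> y; rewrite !inE => /or3P[] /eqP ->.
  - by rewrite hA (nc_evalX v ord0) subrr; exact: comm_ideal0.
  - by rewrite hB (nc_evalX v 1) subrr; exact: comm_ideal0.
  - by rewrite hC (nc_evalX v 2) subrr; exact: comm_ideal0.
by rewrite fz /nc_eval mmap0 subr0 in congr_z.
Qed.
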